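(* For every $q\in\mathbb N$, \[ \frac{2^{4q}}{2q\binom{2q}{q}}=\sum_{l=0}^{q} \binom{2l}{l} \binom{2q-2l}{q-l} \frac{1}{(2l-1)^2}. \] *)

From mathcomp Require Import all_boot all_order all_algebra.
Set Implicit Arguments. Unset Strict Implicit. Unset Printing Implicit Defensive.

From mathcomp Require Import all_boot all_order all_algebra.
From mathcomp Require Import ring zify.
Import GRing.Theory Num.Theory.
Local Open Scope ring_scope.

(* Both sides satisfy (2q+1) x(q+1) = 8q x(q) for q >= 1 and agree at q = 1.
   For the closed form this is the ratio of consecutive central binomial
   coefficients.  For the sum S(q) = \sum_(l <= q) f(q,l) it is Zeilberger's
   creative telescoping: with the certificate g(q,l) = R(q,l) f(q+1,l), where
   R(q,l) = l (2l-1) (q+2-2l) / (q (q+1)), one has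
   (2q+1) f(q+1,l) - 8q f(q,l) = g(q,l+1) - g(q,l) for l <= q; summing over
   l <= q, the boundary terms g(q,0) = 0 and g(q,q+1) = -(2q+1) f(q+1,q+1)
   account exactly for the extra summand of S(q+1). *)

Lemma mul_bin_centralS n :
  (n.+1 * 'C((n.+1).*2, n.+1) = 2 * (n.*2).+1 * 'C(n.*2, n))%N.
Proof.
have sym : 'C((n.*2).+1, n.+1) = 'C((n.*2).+1, n).
  have le_n_2n : (n <= (n.*2).+1)%N by lia.
  by rewrite -(bin_sub le_n_2n) -addnn subSn ?leq_addr // addnK.
by rewrite doubleS binS sym addnn -mul2n mulnCA -sym -mul_bin_diag mulnA.
Qed.

Lemma eq_from_recurrence (R : idomainType) (a b u v : nat -> R) :
  (forall n, (0 < n)%N -> a n != 0) ->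
  (forall n, (0 < n)%N -> a n * u n.+1 = b n * u n) ->
  (forall n, (0 < n)%N -> a n * v n.+1 = b n * v n) ->
  u 1%N = v 1%N -> forall n, (0 < n)%N -> u n = v n.
Proof.
move=> a_neq0 u_rec v_rec uv1; elim=> [//|[//|n] IHn] _.
by apply: (mulfI (a_neq0 n.+1 isT)); rewrite u_rec // v_rec // IHn.
Qed.

Section CentralBinomialConvolution.
Variable F : numFieldType.

Lemma natr_doubleB1_neq0 n : (2 * n)%:R - 1 != 0 :> F.
Proof. by rewrite subr_eq0 pnatr_eq1; apply/eqP; lia. Qed.

Lemma central_binS n :
  'C(2 * n.+1, n.+1)%:R = (2 * (2 * n).+1)%:R / n.+1%:R * 'C(2 * n, n)%:R :> F.
Proof.
apply: (mulfI (_ : n.+1%:R != 0 :> F)); first by rewrite pnatr_eq0.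
rewrite mulrA mulrCA divff ?pnatr_eq0 // mulr1 -!natrM.
by rewrite [(2 * n.+1)%N]mul2n [(2 * n)%N]mul2n mul_bin_centralS.
Qed.

Definition closed_form (q : nat) : F :=
  (2 ^ (4 * q))%:R / ((2 * q)%:R * 'C(2 * q, q)%:R).

Definition conv_term (q l : nat) : F :=
  'C(2 * l, l)%:R * 'C(2 * (q - l), q - l)%:R / ((2 * l)%:R - 1) ^+ 2.

Definition conv_sum (q : nat) : F := \sum_(0 <= l < q.+1) conv_term q l.

Definition wz_cert (q l : nat) : F :=
  l%:R * ((2 * l)%:R - 1) * ((q + 2)%:R - (2 * l)%:R) / (q%:R * q.+1%:R)
  * conv_term q.+1 l.

Lemma closed_formS q : (0 < q)%N ->
  (2 * q).+1%:R * closed_form q.+1 = (8 * q)%:R * closed_form q.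
Proof.
move=> q_gt0; rewrite /closed_form central_binS mulnS expnD.
field.
by rewrite -natrM !nat1r !pnatr_eq0 -!lt0n bin_gt0 leq_pmull ?q_gt0.
Qed.

Lemma wz_pair q l : (0 < q)%N -> (l <= q)%N ->
  (2 * q).+1%:R * conv_term q.+1 l - (8 * q)%:R * conv_term q l
  = wz_cert q l.+1 - wz_cert q l.
Proof.
move=> q_gt0 /subnKC def_q; rewrite -{}def_q in q_gt0 *.
move: (q - l)%N q_gt0 => k lk_gt0.
rewrite /wz_cert /conv_term subSS subSn ?leq_addr // !addKn !central_binS.
field.
by rewrite -!natrD !nat1r -!natrM !natr_doubleB1_neq0 !pnatr_eq0 -(lt0n (l + k)) lk_gt0.
Qed.

Lemma wz_cert0 q : wz_cert q 0 = 0.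
Proof. by rewrite /wz_cert !mul0r. Qed.

Lemma wz_cert_last q : (0 < q)%N ->
  wz_cert q q.+1 = - ((2 * q).+1%:R * conv_term q.+1 q.+1).
Proof.
move=> q_gt0; rewrite /wz_cert.
field.
by rewrite nat1r !pnatr_eq0 -!lt0n q_gt0.
Qed.

Lemma conv_sumS q : (0 < q)%N ->
  (2 * q).+1%:R * conv_sum q.+1 = (8 * q)%:R * conv_sum q.
Proof.
move=> q_gt0.
have tele : \sum_(0 <= l < q.+1)
    ((2 * q).+1%:R * conv_term q.+1 l - (8 * q)%:R * conv_term q l)
    = wz_cert q q.+1 - wz_cert q 0.
  by apply: telescope_sumr_eq => // l /andP[_ /ltnSE]; exact: wz_pair.
rewrite sumrB -!mulr_sumr wz_cert_last // wz_cert0 subr0 in tele.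
rewrite /conv_sum big_nat_recr //= mulrDr.
by rewrite -[_ * conv_term q.+1 q.+1]opprK -tele opprB addrC subrK.
Qed.

Lemma conv_sum1 : conv_sum 1 = closed_form 1.
Proof.
rewrite /conv_sum /closed_form !big_nat_recr //= big_geq // /conv_term.
by rewrite !(mul0n, muln1, subn0, subnn, bin0, bin1) natrX; field.
Qed.

End CentralBinomialConvolution.

Theorem lemma5p3 (q : nat) (hq : (1 <= q)%N) :
  (2 ^ (4 * q))%:R / ((2 * q)%:R * ('C(2 * q, q))%:R)
  = \sum_(0 <= l < q.+1)
      ('C(2 * l, l))%:R * ('C(2 * q - 2 * l, q - l))%:R
        / (((2 * l)%:R - 1) ^+ 2) :> rat.
Proof.
have -> : \sum_(0 <= l < q.+1)
    'C(2 * l, l)%:R * 'C(2 * q - 2 * l, q - l)%:R / ((2 * l)%:R - 1) ^+ 2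
    = conv_sum rat q.
  by apply: eq_bigr => l _; rewrite /conv_term mulnBr.
rewrite -[LHS]/(closed_form rat q).
apply: (@eq_from_recurrence _ (fun n => (2 * n).+1%:R) (fun n => (8 * n)%:R)) hq.
- by move=> n _; rewrite pnatr_eq0.
- exact: closed_formS.
- exact: conv_sumS.
- by rewrite conv_sum1.
Qed.
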